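(* Let $G^1$ be a 1-wconnected 1-graph and let $d$ be the wdistance. For all maximal nodes $x,y,z$ of $G^1$: (i) $d(x,y)$ is an ordinal with $d(x,y)<\omega^2$; (ii) $d(x,y)=0$ if and only if $x=y$; (iii) $d(x,y)=d(y,x)$; (iv) $d(x,z)\le d(x,y)\oplus d(y,z)$, where $\oplus$ is the natural (Hessenberg) sum of ordinals.
   Context: 1-graphs. Let $G^0=\{X^0,B\}$ be a graph whose nodes are called 0-nodes and whose branches are two-element sets of 0-nodes. A 0-tip is an equivalence class of one-ended paths in $G^0$, two being equivalent if they are eventually identical. The 0-tips are partitioned into subsets. To some subsets a single 0-node is adjoined, each 0-node being adjoined to at most one subset. The resulting sets are the 1-nodes, $X^1$ is their set, and $G^1=\{X^0,B,X^1\}$ is a 1-graph. A node of $G^1$ is a 0-node or a 1-node. A 0-node is maximal if it is contained in no 1-node; every 1-node is maximal. 0-walks. A 0-walk is a conventional walk in $G^0$, finite, one-way infinite or two-way infinite, terminating at 0-nodes on any terminating side. It is extended if on each infinite side it is eventually identical to a one-ended path. It reaches a 1-node $x^1$ through a 0-tip if on some infinite side it is eventually identical to a representative of a 0-tip contained in $x^1$. It reaches $x^1$ through a branch if it terminates at a 0-node contained in $x^1$. 1-walks. A nontrivial two-ended 1-walk is a sequence $\langle x_0,W_0^0,x_1^1,W_1^0,\dots,x_{m-1}^1,W_{m-1}^0,x_m\rangle$ with $m\ge 1$ satisfying: - $x_1^1,\dots,x_{m-1}^1$ are 1-nodes, and $x_0,x_m$ are 0-nodes or 1-nodes; - each $W_k^0$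 is a nontrivial 0-walk reaching the two nodes adjacent to it in the sequence; - for each $k=1,\dots,m-1$, at least one of $W_{k-1}^0,W_k^0$ reaches $x_k^1$ through a 0-tip. Lengths. A two-ended 0-walk has length equal to its number of branch traversals. An extended one-ended 0-walk has length $\omega$. An extended endless 0-walk has length $\omega\cdot 2$. A two-ended 1-walk has length equal to the natural sum of the lengths of its 0-walks $W_k^0$, which has the form $\omega\cdot\tau_1+\tau_0$ with $\tau_1\ge1$. Wdistance. The wdistance $d(x,y)$ between nodes $x\ne y$ is the minimum length over all two-ended 0-walks or 1-walks terminating at $x$ and $y$; $d(x,x)=0$. 1-wconnected. $G^1$ is 1-wconnected if every two nodes (equivalently, every two branches) are joined by a 0-walk or a 1-walk, so the wdistance is always defined. *)

From Stdlib Require Import List Arith Classical ClassicalEpsilon.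
Import ListNotations.
Unset Implicit Arguments.

(* Ordinals below omega^2, written omega*hi + lo. *)
Record ord2 := O2 { hi : nat; lo : nat }.

Definition ord_le (a b : ord2) : Prop :=
  hi a < hi b \/ (hi a = hi b /\ lo a <= lo b).

(* natural (Hessenberg) sum: (w*a1+a0) (+) (w*b1+b0) = w*(a1+b1)+(a0+b0) *)
Definition nsum (a b : ord2) : ord2 := O2 (hi a + hi b) (lo a + lo b).

Definition ord_zero : ord2 := O2 0 0.

(* a one-ended path given by its node sequence (branches {p n, p (n+1)}) *)
Definition one_ended (V : Type) (adj : V -> V -> Prop) (p : nat -> V) : Prop :=
  (forall n, adj (p n) (p (S n))) /\ (forall i j, p i = p j -> i = j).

Definition ev_ident (V : Type) (p q : nat -> V) : Prop :=
  exists k l, forall n, p (k + n) = q (l + n).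

(* A 1-graph: 0-nodes V, branches = two-element sets {u,v} with adj u v
   (adj symmetric and irreflexive), 1-nodes N1.  [tipin a p] : the 0-tip of the
   one-ended path p belongs to the 1-node a; the blocks {tips in a} form a
   partition of the set of 0-tips; [emb a] is the 0-node possibly adjoined to a. *)
Record graph1 := {
  V : Type;
  adj : V -> V -> Prop;
  adj_sym : forall u v, adj u v -> adj v u;
  adj_irrefl : forall v, ~ adj v v;
  N1 : Type;
  tipin : N1 -> (nat -> V) -> Prop;
  emb : N1 -> option V;
  tipin_path : forall a p, tipin a p -> one_ended _ adj p;
  tipin_total : forall p, one_ended _ adj p -> exists a, tipin a p;
  tipin_unique : forall a b p, tipin a p -> tipin b p -> a = b;
  tipin_equiv : forall a p q, tipin a p -> one_ended _ adj q -> ev_ident _ p q -> tipin a q;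
  tipin_nonempty : forall a, exists p, tipin a p;
  emb_inj : forall a b v, emb a = Some v -> emb b = Some v -> a = b
}.

Definition node (G : graph1) : Type := (V G + N1 G)%type.

Definition maximal (G : graph1) (x : node G) : Prop :=
  match x with
  | inl v => forall a : N1 G, emb G a <> Some v
  | inr _ => True
  end.

(* WFin s : finite walk through the nodes of s (left to right);
   WR w : one-way infinite, terminating on the left at w 0, infinite to the right;
   WL w : one-way infinite, terminating on the right at w 0, infinite to the left
          (w n is the n-th node counted from the right end);
   WB l r : endless, l 0 = r 0, l going left, r going right. *)
Inductive walk0 (T : Type) :=
| WFin (s : list T)
| WR (w : nat -> T)
| WL (w : nat -> T)
| WB (l r : nat -> T).
Arguments WFin {T}. Arguments WR {T}. Arguments WL {T}. Arguments WB {T}.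

Fixpoint chain (T : Type) (R : T -> T -> Prop) (x : T) (s : list T) : Prop :=
  match s with
  | [] => True
  | y :: s' => R x y /\ chain T R y s'
  end.

Definition ray (T : Type) (R : T -> T -> Prop) (w : nat -> T) : Prop :=
  forall n, R (w n) (w (S n)).

Definition valid0 (G : graph1) (W : walk0 (V G)) : Prop :=
  match W with
  | WFin [] => False
  | WFin (x :: s) => chain _ (adj G) x s
  | WR w => ray _ (adj G) w
  | WL w => ray _ (adj G) w
  | WB l r => l 0 = r 0 /\ ray _ (adj G) l /\ ray _ (adj G) r
  end.

Definition nontrivial0 (T : Type) (W : walk0 T) : Prop :=
  match W with
  | WFin s => 2 <= length s
  | _ => True
  end.

Definition leftTerm (T : Type) (W : walk0 T) : option T :=
  match W with
  | WFin (x :: _) => Some x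
  | WR w => Some (w 0)
  | _ => None
  end.

Definition rightTerm (T : Type) (W : walk0 T) : option T :=
  match W with
  | WFin (x :: s) => Some (last s x)
  | WL w => Some (w 0)
  | _ => None
  end.

Definition leftRay (T : Type) (W : walk0 T) : option (nat -> T) :=
  match W with
  | WL w => Some w
  | WB l _ => Some l
  | _ => None
  end.

Definition rightRay (T : Type) (W : walk0 T) : option (nat -> T) :=
  match W with
  | WR w => Some w
  | WB _ r => Some r
  | _ => None
  end.

Definition len0 (T : Type) (W : walk0 T) : ord2 :=
  match W with
  | WFin s => O2 0 (length s - 1)
  | WR _ => O2 1 0
  | WL _ => O2 1 0
  | WB _ _ => O2 2 0
  end.

Definition ray_reaches_tip (G : graph1) (r : nat -> V G) (a : N1 G) : Prop :=
  exists p, tipin G a p /\ ev_ident _ r p.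

Definition tipL (G : graph1) (W : walk0 (V G)) (a : N1 G) : Prop :=
  exists r, leftRay _ W = Some r /\ ray_reaches_tip G r a.
Definition tipR (G : graph1) (W : walk0 (V G)) (a : N1 G) : Prop :=
  exists r, rightRay _ W = Some r /\ ray_reaches_tip G r a.

Definition reachesL (G : graph1) (W : walk0 (V G)) (x : node G) : Prop :=
  match x with
  | inl v => leftTerm _ W = Some v
  | inr a => (exists v, leftTerm _ W = Some v /\ emb G a = Some v) \/ tipL G W a
  end.
Definition reachesR (G : graph1) (W : walk0 (V G)) (x : node G) : Prop :=
  match x with
  | inl v => rightTerm _ W = Some v
  | inr a => (exists v, rightTerm _ W = Some v /\ emb G a = Some v) \/ tipR G W a
  end.

Record walk1 (G : graph1) := {
  wm : nat;
  wx : nat -> node G;            (* x_0 .. x_m *)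
  wW : nat -> walk0 (V G)        (* W_0 .. W_{m-1} *)
}.

Definition is_walk1 (G : graph1) (w : walk1 G) : Prop :=
  1 <= wm G w /\
  (forall k, 0 < k < wm G w -> exists a, wx G w k = inr a) /\
  (forall k, k < wm G w ->
     valid0 G (wW G w k) /\ nontrivial0 _ (wW G w k) /\
     reachesL G (wW G w k) (wx G w k) /\ reachesR G (wW G w k) (wx G w (S k))) /\
  (forall k a, 0 < k < wm G w -> wx G w k = inr a ->
     tipR G (wW G w (k - 1)) a \/ tipL G (wW G w k) a).

Fixpoint nsum_upto (f : nat -> ord2) (m : nat) : ord2 :=
  match m with
  | 0 => ord_zero
  | S m' => nsum (nsum_upto f m') (f m')
  end.

Definition len1 (G : graph1) (w : walk1 G) : ord2 :=
  nsum_upto (fun k => len0 _ (wW G w k)) (wm G w).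

Inductive gwalk (G : graph1) :=
| GW0 (W : walk0 (V G))
| GW1 (w : walk1 G).

Definition joins (G : graph1) (x y : node G) (w : gwalk G) : Prop :=
  match w with
  | GW0 _ W => (exists s, W = WFin s) /\ valid0 G W /\
             (exists u, x = inl u /\ leftTerm _ W = Some u) /\
             (exists v, y = inl v /\ rightTerm _ W = Some v)
  | GW1 _ w1 => is_walk1 G w1 /\ wx G w1 0 = x /\ wx G w1 (wm G w1) = y
  end.

Definition glen (G : graph1) (w : gwalk G) : ord2 :=
  match w with
  | GW0 _ W => len0 _ W
  | GW1 _ w1 => len1 G w1
  end.

Definition is_wdist (G : graph1) (x y : node G) (o : ord2) : Prop :=
  (x = y /\ o = ord_zero) \/
  (x <> y /\ (exists w, joins G x y w /\ glen G w = o) /\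
   (forall w, joins G x y w -> ord_le o (glen G w))).

Definition wdist (G : graph1) (x y : node G) : ord2 :=
  match excluded_middle_informative (exists o, is_wdist G x y o) with
  | left h => proj1_sig (constructive_indefinite_description _ h)
  | right _ => ord_zero
  end.

Definition wconnected1 (G : graph1) : Prop :=
  forall x y : node G, x <> y -> exists w, joins G x y w.

(* The lengths lie in omega^2, which is well ordered, so the minimum defining d
   exists. Every walk has positive length and reversing a walk preserves its length.
   For the triangle inequality, walks from x to y and from y to z are concatenated
   at y: if y is a 1-node reached through a 0-tip on one side, the two sequences are
   juxtaposed; otherwise both sides end at the same 0-node and the two 0-walks
   meeting there merge into one 0-walk, whose length is at most the natural sum. *)

From Stdlib Require Import List Arith Lia Wf_nat Classical ClassicalEpsilon.
Import ListNotations.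

Lemma ord2_ext (a b : ord2) : hi a = hi b -> lo a = lo b -> a = b.
Proof. destruct a, b; cbn; intros -> ->; reflexivity. Qed.

Ltac ord2_lia := apply ord2_ext; cbn; lia.

Lemma ord_le_trans (a b c : ord2) : ord_le a b -> ord_le b c -> ord_le a c.
Proof. unfold ord_le; lia. Qed.

Lemma ord_le_antisym (a b : ord2) : ord_le a b -> ord_le b a -> a = b.
Proof. unfold ord_le; intros; apply ord2_ext; lia. Qed.

Definition ord_le_cw (a b : ord2) : Prop := hi a <= hi b /\ lo a <= lo b.

Lemma ord_le_cw_le (a b : ord2) : ord_le_cw a b -> ord_le a b.
Proof. unfold ord_le_cw, ord_le; lia. Qed.

Lemma nat_least (P : nat -> Prop) :
  (exists n, P n) -> exists n, P n /\ forall m, P m -> n <= m.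
Proof.
  intros H.
  destruct (dec_inh_nat_subset_has_unique_least_element P (fun n => classic (P n)) H)
    as [n [Hn _]].
  exists n; exact Hn.
Qed.

Lemma ord2_least (P : ord2 -> Prop) :
  (exists o, P o) -> exists o, P o /\ forall o', P o' -> ord_le o o'.
Proof.
  intros [o Po].
  destruct (nat_least (fun h => exists o, P o /\ hi o = h)) as [h [Hex Hh]]; [eauto|].
  destruct (nat_least (fun l => exists o, P o /\ hi o = h /\ lo o = l))
    as [l [[o0 [P0 [E0 F0]]] Hl]]; [destruct Hex as [o1 [P1 E1]]; eauto|].
  exists o0; split; [exact P0|]. intros o' P'.
  assert (h <= hi o') by (apply Hh; eauto).
  destruct (Nat.eq_dec (hi o') h) as [E|E]; unfold ord_le.
  - right. assert (l <= lo o') by (apply Hl; eauto). lia.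
  - left; lia.
Qed.

Lemma nsum_upto_ext (f g : nat -> ord2) (m : nat) :
  (forall k, k < m -> f k = g k) -> nsum_upto f m = nsum_upto g m.
Proof.
  induction m as [|m IH]; intros H; cbn; [reflexivity|].
  rewrite IH, H; [reflexivity | lia | intros; apply H; lia].
Qed.

Lemma nsum_upto_add (f : nat -> ord2) (a b : nat) :
  nsum_upto f (a + b) = nsum (nsum_upto f a) (nsum_upto (fun k => f (a + k)) b).
Proof.
  induction b as [|b IH].
  - rewrite Nat.add_0_r; ord2_lia.
  - rewrite Nat.add_succ_r; cbn; rewrite IH; ord2_lia.
Qed.

Lemma nsum_upto_succ_l (f : nat -> ord2) (m : nat) :
  nsum_upto f (S m) = nsum (f 0) (nsum_upto (fun k => f (S k)) m).
Proof. induction m as [|m IH]; [ord2_lia|]. cbn [nsum_upto] in *. rewrite IH; ord2_lia. Qed.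

Lemma nsum_upto_rev (f : nat -> ord2) (m : nat) :
  nsum_upto (fun k => f (m - S k)) m = nsum_upto f m.
Proof.
  revert f; induction m as [|m IH]; intros f; [reflexivity|].
  rewrite (nsum_upto_succ_l f m), <- (IH (fun k => f (S k))).
  cbn [nsum_upto]; rewrite Nat.sub_diag.
  rewrite (nsum_upto_ext _ (fun k => f (S (m - S k)))) by (intros; f_equal; lia).
  ord2_lia.
Qed.

Definition is_chain {T : Type} (R : T -> T -> Prop) (l : list T) : Prop :=
  match l with [] => False | x :: s => chain T R x s end.

Lemma last_cons {T : Type} (s : list T) (a x : T) : last (a :: s) x = last s a.
Proof.
  revert a x; induction s as [|b s IH]; intros a x; [reflexivity|].
  change (last (b :: s) x = last (b :: s) a). rewrite !IH; reflexivity.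
Qed.

Lemma last_app {T : Type} (s t : list T) (x : T) : last (s ++ t) x = last t (last s x).
Proof.
  revert x; induction s as [|a s IH]; intros x; [reflexivity|].
  cbn [app]; rewrite !last_cons; apply IH.
Qed.

Lemma chain_app {T : Type} (R : T -> T -> Prop) (x : T) (s t : list T) :
  chain T R x (s ++ t) <-> chain T R x s /\ chain T R (last s x) t.
Proof.
  revert x; induction s as [|a s IH]; intros x; cbn [app chain]; [tauto|].
  rewrite IH, last_cons; tauto.
Qed.

Lemma rev_cons_last {T : Type} (x : T) (s : list T) :
  exists t, rev (x :: s) = last s x :: t.
Proof.
  induction s as [|y s _] using rev_ind; [exists []; reflexivity|].
  exists (rev (x :: s)). cbn [rev]. rewrite rev_app_distr, last_last. reflexivity.
Qed.

Lemma is_chain_rev {T : Type} (R : T -> T -> Prop) (l : list T) :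
  (forall u v, R u v -> R v u) -> is_chain R l -> is_chain R (rev l).
Proof.
  intros Rsym. destruct l as [|x s]; [tauto|].
  induction s as [|y s IH] using rev_ind; [tauto|].
  cbn [is_chain]; rewrite chain_app; cbn [chain]; intros [Hs [Hy _]].
  replace (rev (x :: s ++ [y])) with (y :: rev (x :: s))
    by (cbn [rev]; rewrite rev_app_distr; reflexivity).
  specialize (IH Hs). destruct (rev_cons_last x s) as [t E]. rewrite E in *.
  split; [apply Rsym, Hy | exact IH].
Qed.

Definition rev0 {T : Type} (W : walk0 T) : walk0 T :=
  match W with
  | WFin s => WFin (rev s)
  | WR w => WL w
  | WL w => WR w
  | WB l r => WB r l
  end.

Lemma leftTerm_WFin {T : Type} (s : list T) : leftTerm T (WFin s) = hd_error s.
Proof. destruct s; reflexivity. Qed.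

Lemma rightTerm_WFin {T : Type} (s : list T) : rightTerm T (WFin s) = hd_error (rev s).
Proof.
  destruct s as [|x s]; [reflexivity|].
  destruct (rev_cons_last x s) as [t E]; rewrite E; reflexivity.
Qed.

Lemma leftTerm_rev0 {T : Type} (W : walk0 T) : leftTerm T (rev0 W) = rightTerm T W.
Proof. destruct W; try reflexivity. cbn [rev0]; rewrite leftTerm_WFin, rightTerm_WFin; reflexivity. Qed.

Lemma rightTerm_rev0 {T : Type} (W : walk0 T) : rightTerm T (rev0 W) = leftTerm T W.
Proof.
  destruct W; try reflexivity.
  cbn [rev0]; rewrite leftTerm_WFin, rightTerm_WFin, rev_involutive; reflexivity.
Qed.

Lemma len0_rev0 {T : Type} (W : walk0 T) : len0 T (rev0 W) = len0 T W.
Proof. destruct W; cbn; rewrite ?length_rev; reflexivity. Qed.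

Lemma nontrivial0_rev0 {T : Type} (W : walk0 T) : nontrivial0 T W -> nontrivial0 T (rev0 W).
Proof. destruct W; cbn; rewrite ?length_rev; tauto. Qed.

Lemma valid0_rev0 (G : graph1) (W : walk0 (V G)) : valid0 G W -> valid0 G (rev0 W).
Proof.
  destruct W as [s| | |l r]; cbn [rev0]; try tauto.
  - exact (is_chain_rev (adj G) s (adj_sym G)).
  - cbn; intros [E [Hl Hr]]; auto.
Qed.

Lemma tipL_rev0 (G : graph1) (W : walk0 (V G)) (a : N1 G) : tipL G (rev0 W) a <-> tipR G W a.
Proof. destruct W; reflexivity. Qed.

Lemma tipR_rev0 (G : graph1) (W : walk0 (V G)) (a : N1 G) : tipR G (rev0 W) a <-> tipL G W a.
Proof. destruct W; reflexivity. Qed.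

Lemma reachesL_rev0 (G : graph1) (W : walk0 (V G)) (x : node G) :
  reachesL G (rev0 W) x <-> reachesR G W x.
Proof. destruct x; cbn [reachesL reachesR]; rewrite leftTerm_rev0, ?tipL_rev0; reflexivity. Qed.

Lemma reachesR_rev0 (G : graph1) (W : walk0 (V G)) (x : node G) :
  reachesR G (rev0 W) x <-> reachesL G W x.
Proof. destruct x; cbn [reachesL reachesR]; rewrite rightTerm_rev0, ?tipR_rev0; reflexivity. Qed.

Fixpoint prepend {T : Type} (s : list T) (w : nat -> T) : nat -> T :=
  match s with
  | [] => w
  | x :: s' => fun n => match n with 0 => x | S n' => prepend s' w n' end
  end.

Lemma prepend_skip {T : Type} (s : list T) (w : nat -> T) (n : nat) :
  prepend s w (length s + n) = w n.
Proof. induction s as [|x s IH]; [reflexivity|]. exact IH. Qed.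

Lemma ray_prepend {T : Type} (R : T -> T -> Prop) (x : T) (s : list T) (w : nat -> T) :
  chain T R x s -> R (last s x) (w 0) -> ray T R w -> ray T R (prepend (x :: s) w).
Proof.
  revert x; induction s as [|y s IH]; intros x Hs Hlast Hw [|n]; try exact Hlast.
  - exact (Hw n).
  - exact (proj1 Hs).
  - rewrite last_cons in Hlast. exact (IH y (proj2 Hs) Hlast Hw n).
Qed.

Lemma ev_ident_trans {T : Type} (p q r : nat -> T) :
  ev_ident T p q -> ev_ident T q r -> ev_ident T p r.
Proof.
  intros [k1 [l1 H1]] [k2 [l2 H2]]. exists (k1 + k2), (l2 + l1). intros n.
  rewrite <- Nat.add_assoc, H1, (Nat.add_comm l1), <- Nat.add_assoc, H2.
  f_equal; lia.
Qed.

(* [M] traverses [W] and then [W'], which meet at a 0-node. A finite part followed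
   by a ray is absorbed by it, hence only an upper bound on the length. *)
Record merges (G : graph1) (W W' M : walk0 (V G)) : Prop := {
  merges_valid : valid0 G M;
  merges_nontrivial : nontrivial0 _ M;
  merges_leftTerm : leftTerm _ M = leftTerm _ W;
  merges_tipL : forall a, tipL G W a -> tipL G M a;
  merges_rightTerm : rightTerm _ M = rightTerm _ W';
  merges_tipR : forall a, tipR G W' a -> tipR G M a;
  merges_len : ord_le_cw (len0 _ M) (nsum (len0 _ W) (len0 _ W'))
}.

Lemma merges_rev0 (G : graph1) (W W' M : walk0 (V G)) :
  merges G W W' M -> merges G (rev0 W') (rev0 W) (rev0 M).
Proof.
  intros [Hv Hn HlT HtL HrT HtR Hlen]. split.
  - apply valid0_rev0, Hv.
  - apply nontrivial0_rev0, Hn.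
  - rewrite !leftTerm_rev0; exact HrT.
  - intros a; rewrite !tipL_rev0; apply HtR.
  - rewrite !rightTerm_rev0; exact HlT.
  - intros a; rewrite !tipR_rev0; apply HtL.
  - rewrite !len0_rev0. unfold ord_le_cw in *; cbn in *; lia.
Qed.

Lemma tipL_WFin (G : graph1) (s : list (V G)) (a : N1 G) : ~ tipL G (WFin s) a.
Proof. intros [r [Hr _]]; discriminate. Qed.

Lemma tipR_WFin (G : graph1) (s : list (V G)) (a : N1 G) : ~ tipR G (WFin s) a.
Proof. intros [r [Hr _]]; discriminate. Qed.

Lemma merges_fin_fin (G : graph1) (x y : V G) (s t : list (V G)) :
  valid0 G (WFin (x :: s)) -> nontrivial0 _ (WFin (x :: s)) -> valid0 G (WFin (y :: t)) ->
  last s x = y -> merges G (WFin (x :: s)) (WFin (y :: t)) (WFin (x :: s ++ t)).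
Proof.
  cbn; intros Hs Hn Ht Hlast. split; cbn.
  - apply chain_app; rewrite Hlast; auto.
  - rewrite length_app; lia.
  - reflexivity.
  - intros a Ha; contradiction (tipL_WFin G _ a Ha).
  - rewrite last_app, Hlast; reflexivity.
  - intros a Ha; contradiction (tipR_WFin G _ a Ha).
  - unfold ord_le_cw; cbn; rewrite length_app; lia.
Qed.

Lemma merges_fin_ray (G : graph1) (x : V G) (s : list (V G)) (r : nat -> V G) :
  valid0 G (WFin (x :: s)) -> valid0 G (WR r) -> last s x = r 0 ->
  merges G (WFin (x :: s)) (WR r) (WR (prepend (x :: s) (fun n => r (S n)))).
Proof.
  cbn; intros Hs Hr Hlast. split; cbn.
  - apply ray_prepend; [exact Hs | rewrite Hlast; apply Hr | intros n; apply Hr].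
  - exact I.
  - reflexivity.
  - intros a Ha; contradiction (tipL_WFin G _ a Ha).
  - reflexivity.
  - intros a [r' [Hr' [p [Hp Hev]]]]. injection Hr' as <-.
    eexists; split; [reflexivity|]. exists p; split; [exact Hp|].
    apply (ev_ident_trans _ r); [|exact Hev].
    exists (length (x :: s)), 1; intros n; apply (prepend_skip (x :: s) (fun n => r (S n))).
  - unfold ord_le_cw; cbn; lia.
Qed.

Lemma merges_ray_ray (G : graph1) (l r : nat -> V G) :
  valid0 G (WL l) -> valid0 G (WR r) -> l 0 = r 0 -> merges G (WL l) (WR r) (WB l r).
Proof.
  intros Hl Hr E. split; cbn; auto.
  unfold ord_le_cw; cbn; lia.
Qed.

Lemma merges_exists (G : graph1) (W W' : walk0 (V G)) (v : V G) :
  valid0 G W -> valid0 G W' -> nontrivial0 _ W -> nontrivial0 _ W' ->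
  rightTerm _ W = Some v -> leftTerm _ W' = Some v -> exists M, merges G W W' M.
Proof.
  intros HW HW' Hn Hn' Er El.
  destruct W as [[|x s]| |l|]; try discriminate;
  destruct W' as [[|y t]|r| |]; try discriminate; cbn in Er, El;
  injection Er as Er; injection El as El.
  - eexists; apply merges_fin_fin; assumption || congruence.
  - eexists; apply merges_fin_ray; assumption || congruence.
  - destruct (rev_cons_last y t) as [t' E].
    assert (Hlast : last t' (last t y) = l 0).
    { pose proof (rightTerm_rev0 (WFin (y :: t))) as R.
      cbn [rev0] in R; rewrite E in R; cbn in R; congruence. }
    pose proof (valid0_rev0 G _ HW') as Hv. cbn [rev0] in Hv; rewrite E in Hv.
    pose proof (merges_rev0 G _ _ _ (merges_fin_ray G _ _ l Hv HW Hlast)) as M.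
    rewrite <- E in M; cbn [rev0] in M; rewrite rev_involutive in M.
    eexists; exact M.
  - eexists; apply merges_ray_ray; assumption || congruence.
Qed.

Lemma reachesL_merges (G : graph1) (W W' M : walk0 (V G)) (x : node G) :
  merges G W W' M -> reachesL G W x -> reachesL G M x.
Proof.
  intros HM. destruct x; cbn; rewrite (merges_leftTerm _ _ _ _ HM); [tauto|].
  pose proof (merges_tipL _ _ _ _ HM n); tauto.
Qed.

Lemma reachesR_merges (G : graph1) (W W' M : walk0 (V G)) (x : node G) :
  merges G W W' M -> reachesR G W' x -> reachesR G M x.
Proof.
  intros HM. destruct x; cbn; rewrite (merges_rightTerm _ _ _ _ HM); [tauto|].
  pose proof (merges_tipR _ _ _ _ HM n); tauto.
Qed.

(* A 1-node contains at most one 0-node. *)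
Lemma reaches_common_vertex (G : graph1) (W W' : walk0 (V G)) (y : node G) :
  reachesR G W y -> reachesL G W' y ->
  (forall a, y = inr a -> ~ tipR G W a /\ ~ tipL G W' a) ->
  exists v, rightTerm _ W = Some v /\ leftTerm _ W' = Some v.
Proof.
  destruct y as [v|a]; cbn; intros HR HL Hnotip; [eauto|].
  destruct (Hnotip a eq_refl) as [NR NL].
  destruct HR as [[v [Hv Ev]]|]; [|tauto].
  destruct HL as [[v' [Hv' Ev']]|]; [|tauto].
  exists v; split; congruence.
Qed.

Definition walk1_of_walk0 (G : graph1) (u v : V G) (W : walk0 (V G)) : walk1 G :=
  Build_walk1 G 1 (fun k => match k with 0 => inl u | _ => inl v end) (fun _ => W).

Lemma joins_walk1 (G : graph1) (x y : node G) (w : gwalk G) :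
  joins G x y w -> x <> y ->
  exists w1, is_walk1 G w1 /\ wx G w1 0 = x /\ wx G w1 (wm G w1) = y /\ len1 G w1 = glen G w.
Proof.
  destruct w as [W|w1]; cbn [joins glen]; [|intros [Hw [Hx Hy]] _; eauto].
  intros [[s ->] [Hv [[u [-> Hu]] [v [-> Hv']]]]] Hne.
  exists (walk1_of_walk0 G u v (WFin s)).
  unfold is_walk1, walk1_of_walk0, len1; cbn [wm wx wW].
  split; [|repeat split]. split; [lia|split; [|split]]; intros k; try lia.
  intros Hk; assert (k = 0) as -> by lia. repeat split; try assumption.
  destruct s as [|a [|b s]]; cbn in *; try lia; try contradiction.
  injection Hu as <-; injection Hv' as <-; congruence.
Qed.

Lemma len1_pos (G : graph1) (w : walk1 G) :
  is_walk1 G w -> 0 < hi (len1 G w) + lo (len1 G w).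
Proof.
  destruct w as [[|m] x W]; intros [Hm [_ [HW _]]]; cbn in Hm; [lia|].
  destruct (HW m ltac:(cbn; lia)) as [_ [Hn _]]. unfold len1; cbn in *.
  destruct (W m) as [s| | |]; cbn in *; lia.
Qed.

Definition rev1 (G : graph1) (w : walk1 G) : walk1 G :=
  Build_walk1 G (wm G w) (fun k => wx G w (wm G w - k))
    (fun k => rev0 (wW G w (wm G w - S k))).

Lemma is_walk1_rev1 (G : graph1) (w : walk1 G) : is_walk1 G w -> is_walk1 G (rev1 G w).
Proof.
  destruct w as [m x W]; unfold is_walk1, rev1; cbn [wm wx wW].
  intros [Hm [Hint [HW Htip]]]. split; [exact Hm|split; [|split]].
  - intros k Hk. apply Hint; lia.
  - intros k Hk. destruct (HW (m - S k) ltac:(lia)) as [Hv [Hn [HL HR]]].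
    rewrite reachesL_rev0, reachesR_rev0.
    replace (m - k) with (S (m - S k)) by lia.
    auto using valid0_rev0, nontrivial0_rev0.
  - intros k a Hk Ha. rewrite tipL_rev0, tipR_rev0.
    replace (m - S (k - 1)) with (m - k) by lia. replace (m - S k) with (m - k - 1) by lia.
    destruct (Htip (m - k) a ltac:(lia) Ha); tauto.
Qed.

Lemma len1_rev1 (G : graph1) (w : walk1 G) : len1 G (rev1 G w) = len1 G w.
Proof.
  unfold len1, rev1; cbn [wm wW].
  rewrite (nsum_upto_ext _ (fun k => len0 _ (wW G w (wm G w - S k))))
    by (intros; apply len0_rev0).
  apply (nsum_upto_rev (fun k => len0 _ (wW G w k))).
Qed.

Lemma joins_sym (G : graph1) (x y : node G) (w : gwalk G) :
  joins G x y w -> exists w', joins G y x w' /\ glen G w' = glen G w.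
Proof.
  destruct w as [W|w1]; cbn [joins glen].
  - intros [[s ->] [Hv [[u [-> Hu]] [v [-> Hv']]]]].
    exists (GW0 G (rev0 (WFin s))); cbn [joins glen].
    rewrite leftTerm_rev0, rightTerm_rev0, len0_rev0.
    split; [|reflexivity]. split; [eexists; reflexivity|].
    split; [apply valid0_rev0, Hv | split; eauto].
  - intros [Hw [Hx Hy]]. exists (GW1 G (rev1 G w1)); cbn [joins glen].
    rewrite len1_rev1. split; [|reflexivity].
    split; [apply is_walk1_rev1, Hw|]. cbn [rev1 wm wx].
    rewrite Nat.sub_0_r, Nat.sub_diag; auto.
Qed.

Definition seq_cat {A : Type} (m : nat) (f g : nat -> A) (k : nat) : A :=
  if k <? m then f k else g (k - m).

Lemma seq_cat_lt {A : Type} (m : nat) (f g : nat -> A) (k : nat) :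
  k < m -> seq_cat m f g k = f k.
Proof. unfold seq_cat; intros Hk; apply Nat.ltb_lt in Hk; rewrite Hk; reflexivity. Qed.

Lemma seq_cat_ge {A : Type} (m : nat) (f g : nat -> A) (k : nat) :
  m <= k -> seq_cat m f g k = g (k - m).
Proof. unfold seq_cat; intros Hk; apply Nat.ltb_ge in Hk; rewrite Hk; reflexivity. Qed.

Lemma seq_cat_le {A : Type} (m : nat) (f g : nat -> A) (k : nat) :
  f m = g 0 -> k <= m -> seq_cat m f g k = f k.
Proof.
  intros E Hk. destruct (Nat.eq_dec k m) as [->|].
  - rewrite seq_cat_ge, Nat.sub_diag by lia; auto.
  - apply seq_cat_lt; lia.
Qed.

Record walk1_concat (G : graph1) (w1 w2 c : walk1 G) : Prop := {
  concat_walk : is_walk1 G c;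
  concat_start : wx G c 0 = wx G w1 0;
  concat_end : wx G c (wm G c) = wx G w2 (wm G w2);
  concat_len : ord_le_cw (len1 G c) (nsum (len1 G w1) (len1 G w2))
}.

Definition cat1 (G : graph1) (w1 w2 : walk1 G) : walk1 G :=
  Build_walk1 G (wm G w1 + wm G w2)
    (seq_cat (wm G w1) (wx G w1) (wx G w2)) (seq_cat (wm G w1) (wW G w1) (wW G w2)).

Lemma is_walk1_cat1 (G : graph1) (w1 w2 : walk1 G) (a0 : N1 G) :
  is_walk1 G w1 -> is_walk1 G w2 -> wx G w1 (wm G w1) = wx G w2 0 -> wx G w2 0 = inr a0 ->
  tipR G (wW G w1 (wm G w1 - 1)) a0 \/ tipL G (wW G w2 0) a0 ->
  is_walk1 G (cat1 G w1 w2).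
Proof.
  destruct w1 as [m1 x1 W1], w2 as [m2 x2 W2]; unfold is_walk1, cat1; cbn [wm wx wW].
  intros [Hm1 [Hint1 [HW1 Htip1]]] [Hm2 [Hint2 [HW2 Htip2]]] Ey Ea0 Hjoin.
  split; [lia|split; [|split]].
  - intros k Hk. destruct (Nat.lt_ge_cases k m1).
    + rewrite seq_cat_lt by lia. apply Hint1; lia.
    + rewrite seq_cat_ge by lia. destruct (Nat.eq_dec k m1) as [->|].
      * rewrite Nat.sub_diag; eauto.
      * apply Hint2; lia.
  - intros k Hk. destruct (Nat.lt_ge_cases k m1).
    + rewrite !(seq_cat_le m1 x1 x2 _ Ey), seq_cat_lt by lia. apply HW1; lia.
    + rewrite !seq_cat_ge by lia. replace (S k - m1) with (S (k - m1)) by lia.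
      apply HW2; lia.
  - intros k a Hk Ha. destruct (Nat.lt_ge_cases k m1) as [Hlt|Hge].
    + rewrite seq_cat_lt in Ha by lia. rewrite !seq_cat_lt by lia. apply Htip1; [lia | exact Ha].
    + rewrite seq_cat_ge in Ha by lia. rewrite (seq_cat_ge m1 W1 W2 k) by lia.
      destruct (Nat.eq_dec k m1) as [->|].
      * rewrite seq_cat_lt, Nat.sub_diag by lia. rewrite Nat.sub_diag, Ea0 in Ha.
        injection Ha as <-. exact Hjoin.
      * rewrite seq_cat_ge by lia. replace (k - 1 - m1) with (k - m1 - 1) by lia.
        apply Htip2; [lia | exact Ha].
Qed.

Lemma len1_cat1 (G : graph1) (w1 w2 : walk1 G) :
  len1 G (cat1 G w1 w2) = nsum (len1 G w1) (len1 G w2).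
Proof.
  unfold len1, cat1; cbn [wm wW]. rewrite nsum_upto_add. f_equal.
  - apply nsum_upto_ext; intros k Hk. rewrite seq_cat_lt by exact Hk. reflexivity.
  - apply nsum_upto_ext; intros k _. rewrite seq_cat_ge by lia. do 3 f_equal; lia.
Qed.

Lemma walk1_concat_cat1 (G : graph1) (w1 w2 : walk1 G) (a0 : N1 G) :
  is_walk1 G w1 -> is_walk1 G w2 -> wx G w1 (wm G w1) = wx G w2 0 -> wx G w2 0 = inr a0 ->
  tipR G (wW G w1 (wm G w1 - 1)) a0 \/ tipL G (wW G w2 0) a0 ->
  walk1_concat G w1 w2 (cat1 G w1 w2).
Proof.
  intros H1 H2 Ey Ea0 Hjoin. split.
  - eapply is_walk1_cat1; eauto.
  - cbn. rewrite seq_cat_lt; [reflexivity|]. destruct H1; lia.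
  - cbn. rewrite seq_cat_ge by lia. f_equal; lia.
  - rewrite len1_cat1. unfold ord_le_cw; lia.
Qed.

(* The last 0-walk of [w1] and the first one of [w2] are replaced by their merge [M]. *)
Definition cat_merge (G : graph1) (w1 w2 : walk1 G) (M : walk0 (V G)) : walk1 G :=
  Build_walk1 G (wm G w1 + wm G w2 - 1)
    (seq_cat (wm G w1) (wx G w1) (fun j => wx G w2 (S j)))
    (seq_cat (wm G w1 - 1) (wW G w1)
       (fun j => match j with 0 => M | S j' => wW G w2 (S j') end)).

Lemma is_walk1_cat_merge (G : graph1) (w1 w2 : walk1 G) (M : walk0 (V G)) :
  is_walk1 G w1 -> is_walk1 G w2 ->
  merges G (wW G w1 (wm G w1 - 1)) (wW G w2 0) M ->
  is_walk1 G (cat_merge G w1 w2 M).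
Proof.
  destruct w1 as [m1 x1 W1], w2 as [m2 x2 W2]; unfold is_walk1, cat_merge; cbn [wm wx wW].
  intros [Hm1 [Hint1 [HW1 Htip1]]] [Hm2 [Hint2 [HW2 Htip2]]] HM.
  split; [lia|split; [|split]].
  - intros k Hk. destruct (Nat.lt_ge_cases k m1).
    + rewrite seq_cat_lt by lia. apply Hint1; lia.
    + rewrite seq_cat_ge by lia. apply Hint2; lia.
  - intros k Hk. destruct (Nat.lt_ge_cases k (m1 - 1)) as [Hlt|Hge].
    + rewrite !seq_cat_lt by lia. apply HW1; lia.
    + rewrite (seq_cat_ge (m1 - 1)), (seq_cat_ge m1 _ _ (S k)) by lia.
      destruct (Nat.eq_dec k (m1 - 1)) as [->|].
      * rewrite Nat.sub_diag, seq_cat_lt by lia. replace (S (m1 - 1) - m1) with 0 by lia.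
        destruct (HW1 (m1 - 1) ltac:(lia)) as [_ [_ [HL _]]].
        destruct (HW2 0 ltac:(lia)) as [_ [_ [_ HR]]].
        split; [apply HM | split; [apply HM |]].
        split; [eapply reachesL_merges | eapply reachesR_merges]; eauto.
      * rewrite seq_cat_ge by lia.
        replace (k - (m1 - 1)) with (S (k - m1)) by lia. replace (S k - m1) with (S (k - m1)) by lia.
        apply HW2; lia.
  - intros k a Hk Ha. destruct (Nat.lt_ge_cases k m1) as [Hlt|Hge].
    + rewrite seq_cat_lt in Ha by lia. destruct (Htip1 k a ltac:(lia) Ha) as [HR|HL].
      * left. rewrite seq_cat_lt by lia. exact HR.
      * right. destruct (Nat.lt_ge_cases k (m1 - 1)).
        -- rewrite seq_cat_lt by lia. exact HL.
        -- rewrite seq_cat_ge by lia. replace (k - (m1 - 1)) with 0 by lia.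
           apply HM. replace (m1 - 1) with k by lia. exact HL.
    + rewrite seq_cat_ge in Ha by lia. rewrite !seq_cat_ge by lia.
      replace (k - (m1 - 1)) with (S (k - m1)) by lia.
      destruct (Htip2 (S (k - m1)) a ltac:(lia) Ha) as [HR|HL]; [left|right; exact HL].
      replace (S (k - m1) - 1) with (k - m1) in HR by lia.
      destruct (Nat.eq_dec k m1) as [->|].
      * replace (m1 - 1 - (m1 - 1)) with 0 by lia. apply HM.
        rewrite Nat.sub_diag in HR. exact HR.
      * replace (k - 1 - (m1 - 1)) with (S (k - m1 - 1)) by lia.
        replace (k - m1) with (S (k - m1 - 1)) in HR by lia. exact HR.
Qed.

Lemma len1_cat_merge (G : graph1) (w1 w2 : walk1 G) (M : walk0 (V G)) :
  1 <= wm G w1 -> 1 <= wm G w2 ->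
  ord_le_cw (len0 _ M) (nsum (len0 _ (wW G w1 (wm G w1 - 1))) (len0 _ (wW G w2 0))) ->
  ord_le_cw (len1 G (cat_merge G w1 w2 M)) (nsum (len1 G w1) (len1 G w2)).
Proof.
  destruct w1 as [[|p1] x1 W1], w2 as [[|p2] x2 W2]; cbn [wm wW]; try lia.
  intros _ _ HM. unfold len1, cat_merge; cbn [wm wW].
  replace (S p1 + S p2 - 1) with (p1 + S p2) by lia. replace (S p1 - 1) with p1 in * by lia.
  rewrite nsum_upto_add, nsum_upto_succ_l, (nsum_upto_succ_l (fun k => len0 _ (W2 k))).
  rewrite (nsum_upto_ext _ (fun k => len0 _ (W1 k)) p1)
    by (intros k Hk; rewrite seq_cat_lt by lia; reflexivity).
  rewrite (nsum_upto_ext _ (fun k => len0 _ (W2 (S k))) p2)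
    by (intros k _; rewrite seq_cat_ge by lia; replace (p1 + S k - p1) with (S k) by lia;
        reflexivity).
  rewrite seq_cat_ge, Nat.add_0_r, Nat.sub_diag by lia.
  unfold ord_le_cw in *; cbn in *; lia.
Qed.

Lemma walk1_concat_cat_merge (G : graph1) (w1 w2 : walk1 G) (M : walk0 (V G)) :
  is_walk1 G w1 -> is_walk1 G w2 ->
  merges G (wW G w1 (wm G w1 - 1)) (wW G w2 0) M ->
  walk1_concat G w1 w2 (cat_merge G w1 w2 M).
Proof.
  intros H1 H2 HM. pose proof (proj1 H1) as Hm1. pose proof (proj1 H2) as Hm2. split.
  - apply is_walk1_cat_merge; assumption.
  - cbn. rewrite seq_cat_lt by lia. reflexivity.
  - cbn. rewrite seq_cat_ge by lia. f_equal; lia.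
  - apply len1_cat_merge; [assumption | assumption | apply HM].
Qed.

Lemma walk1_concat_exists (G : graph1) (w1 w2 : walk1 G) :
  is_walk1 G w1 -> is_walk1 G w2 -> wx G w1 (wm G w1) = wx G w2 0 ->
  exists c, walk1_concat G w1 w2 c.
Proof.
  intros H1 H2 Ey.
  destruct (classic (exists a, wx G w2 0 = inr a /\
      (tipR G (wW G w1 (wm G w1 - 1)) a \/ tipL G (wW G w2 0) a))) as [[a [Ea Hjoin]]|Hnotip].
  { exists (cat1 G w1 w2). eapply walk1_concat_cat1; eauto. }
  pose proof H1 as [Hm1 [_ [HW1 _]]]. pose proof H2 as [Hm2 [_ [HW2 _]]].
  destruct (HW1 (wm G w1 - 1) ltac:(lia)) as [Hv1 [Hn1 [_ HR]]].
  destruct (HW2 0 ltac:(lia)) as [Hv2 [Hn2 [HL _]]].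
  replace (S (wm G w1 - 1)) with (wm G w1) in HR by lia. rewrite Ey in HR.
  destruct (reaches_common_vertex G _ _ _ HR HL) as [v [Er El]].
  { intros a Ea; split; intros Ht; apply Hnotip; eauto. }
  destruct (merges_exists G _ _ v Hv1 Hv2 Hn1 Hn2 Er El) as [M HM].
  exists (cat_merge G w1 w2 M). apply walk1_concat_cat_merge; assumption.
Qed.

Lemma is_wdist_unique (G : graph1) (x y : node G) (o o' : ord2) :
  is_wdist G x y o -> is_wdist G x y o' -> o = o'.
Proof.
  intros [[E ->]|[NE [[w [Hw <-]] Hmin]]] [[E' ->]|[NE' [[w' [Hw' <-]] Hmin']]];
    try reflexivity; try contradiction.
  apply ord_le_antisym; auto.
Qed.

Lemma is_wdist_sym (G : graph1) (x y : node G) (o : ord2) :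
  is_wdist G x y o -> is_wdist G y x o.
Proof.
  intros [[-> ->]|[NE [[w [Hw Hlen]] Hmin]]]; [left; auto|right].
  split; [congruence|split].
  - destruct (joins_sym G x y w Hw) as [w' [Hw' Hlen']]. exists w'; split; congruence.
  - intros w0 Hw0. destruct (joins_sym G y x w0 Hw0) as [w' [Hw' <-]]. auto.
Qed.

Section Wconnected.

Variable G : graph1.
Hypothesis Hc : wconnected1 G.

Lemma wdist_spec (x y : node G) : is_wdist G x y (wdist G x y).
Proof.
  assert (Hex : exists o, is_wdist G x y o).
  { destruct (classic (x = y)) as [E|NE]; [exists ord_zero; left; auto|].
    destruct (ord2_least (fun o => exists w, joins G x y w /\ glen G w = o))
      as [o [Ho Hmin]].
    - destruct (Hc x y NE) as [w Hw]; eauto.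
    - exists o; right; split; [exact NE|split; [exact Ho|]]. eauto. }
  unfold wdist. destruct (excluded_middle_informative _) as [h|]; [|contradiction].
  exact (proj2_sig (constructive_indefinite_description _ h)).
Qed.

Lemma wdist_eq0 (x y : node G) : wdist G x y = ord_zero <-> x = y.
Proof.
  split.
  - intros H0. destruct (wdist_spec x y) as [[E _]|[NE [[w [Hw Hlen]] _]]]; [exact E|].
    destruct (joins_walk1 G x y w Hw NE) as [w1 [Hw1 [_ [_ Hlen1]]]].
    pose proof (len1_pos G w1 Hw1) as Hpos. rewrite Hlen1, Hlen, H0 in Hpos.
    cbn in Hpos; lia.
  - intros <-. destruct (wdist_spec x x) as [[_ E]|[NE _]]; [exact E|contradiction].
Qed.

Lemma wdist_sym (x y : node G) : wdist G x y = wdist G y x.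
Proof. apply (is_wdist_unique G x y); [apply wdist_spec | apply is_wdist_sym, wdist_spec]. Qed.

Lemma wdist_triangle (x y z : node G) :
  ord_le (wdist G x z) (nsum (wdist G x y) (wdist G y z)).
Proof.
  destruct (classic (x = y)) as [<-|Nxy].
  { rewrite (proj2 (wdist_eq0 x x) eq_refl). unfold ord_le; cbn; lia. }
  destruct (classic (y = z)) as [<-|Nyz].
  { rewrite (proj2 (wdist_eq0 y y) eq_refl). unfold ord_le; cbn; lia. }
  destruct (classic (x = z)) as [<-|Nxz].
  { rewrite (proj2 (wdist_eq0 x x) eq_refl). unfold ord_le; cbn; lia. }
  destruct (wdist_spec x y) as [[E _]|[_ [[w1 [Hw1 <-]] _]]]; [contradiction|].
  destruct (wdist_spec y z) as [[E _]|[_ [[w2 [Hw2 <-]] _]]]; [contradiction|].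
  destruct (wdist_spec x z) as [[E _]|[_ [_ Hmin]]]; [contradiction|].
  destruct (joins_walk1 G x y w1 Hw1 Nxy) as [u1 [Hu1 [Hx [Hy <-]]]].
  destruct (joins_walk1 G y z w2 Hw2 Nyz) as [u2 [Hu2 [Hy' [Hz <-]]]].
  destruct (walk1_concat_exists G u1 u2 Hu1 Hu2 ltac:(congruence)) as [c Hcat].
  apply (ord_le_trans _ (len1 G c)).
  - apply (Hmin (GW1 G c)). split; [apply Hcat|].
    rewrite (concat_start _ _ _ _ Hcat), (concat_end _ _ _ _ Hcat); auto.
  - apply ord_le_cw_le, Hcat.
Qed.

End Wconnected.

Theorem lemma7p1 (G : graph1) (Hc : wconnected1 G) :
  forall x y z : node G, maximal G x -> maximal G y -> maximal G z ->
    is_wdist G x y (wdist G x y) /\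
    (wdist G x y = ord_zero <-> x = y) /\
    wdist G x y = wdist G y x /\
    ord_le (wdist G x z) (nsum (wdist G x y) (wdist G y z)).
Proof.
  intros x y z _ _ _.
  split; [apply wdist_spec, Hc|].
  split; [apply wdist_eq0, Hc|].
  split; [apply wdist_sym, Hc | apply wdist_triangle, Hc].
Qed.
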